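(* Let $\mathcal{A}=(\Sigma,Q,\Delta,I,F)$ be a trim automaton and $m=|\Delta|$. There exists a regular expression $R$ such that $Gl(R)$ is a topological coding of $\mathcal{A}$. Moreover, the size of $R$ is in $O(m^2)$, $R$ contains exactly one Kleene star, and the number of transitions of $Gl(R)$ is in $O(m^2)$.
   Context: An automaton $(\Sigma,Q,\Delta,I,F)$ has $\Delta\subseteq Q\times\Sigma\times Q$; it is trim if every state is reachable from an initial state and co-reachable to a final state. A computation is an alternating sequence of states and transitions $(q_0,\delta_1,q_1,\dots,\delta_k,q_k)$ with $\delta_j=(q_{j-1},a_j,q_j)$; source $q_0$, target $q_k$, label $a_1\cdots a_k$; a state is internal if it occurs at a position other than first and last. Regular expressions: $R::=\varepsilon\mid a\mid R^*\mid R\cdot R\mid R+R$. A linearisation $R'$ replaces each atom occurrence by a distinct fresh position from $\Gamma$, with $\overline\alpha$ the original letter; $Gl(R)$ is the trim part of $(\Sigma,\{i\}\uplus\Gamma,\Delta',\{i\},F')$ with $\Delta'=\{(\alpha,\overline\beta,\beta):\exists u,v,\ u\alpha\beta v\in L(R')\}\cup\{(i,\overline\alpha,\alpha):\exists u,\ \alpha u\in L(R')\}$, $F'=\{\alpha:\exists u,\ u\alpha\in L(R')\}\cup(\{i\}$ if $\varepsilon\in L(R'))$. Topological coding: $\mathcal{B}=(\Sigma_\mathcal{B},Q_\mathcal{B},\Delta_\mathcal{B},I_\mathcal{B},F_\mathcal{B})$ is a topological coding of $\mathcal{A}=(\Sigma_\mathcal{A},Q_\mathcal{A},\Delta_\mathcal{A},I_\mathcal{A},F_\mathcal{A})$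 if there exist words $u_i,u_f\in\Sigma_\mathcal{B}^*$, an injective $\lambda:\Sigma_\mathcal{A}\to\Sigma_\mathcal{B}^+$ and an injective $\nu:Q_\mathcal{A}\to Q_\mathcal{B}$ such that, with $W^{\mathrm{init}}$ = computations of $\mathcal{B}$ with source in $I_\mathcal{B}$ and label $u_i$, $W^{\mathrm{trans}}$ = computations with source in $\mathrm{im}(\nu)$ and label in $\mathrm{im}(\lambda)$, $W^{\mathrm{final}}$ = computations with source in $\mathrm{im}(\nu)$ and label $u_f$, there exist bijections $\eta_i:I_\mathcal{A}\to W^{\mathrm{init}}$ (with $\eta_i(s)$ ending in $\nu(s)$ and no state at a non-last position of any $\eta_i(s)$ in $\mathrm{im}(\nu)$), $\eta:\Delta_\mathcal{A}\to W^{\mathrm{trans}}$ (with $\eta((s,a,t))$ starting in $\nu(s)$, labelled $\lambda(a)$, ending in $\nu(t)$, with no internal state in $\mathrm{im}(\nu)$), and $\eta_f:F_\mathcal{A}\to W^{\mathrm{final}}$ (with $\eta_f(s)$ ending in $F_\mathcal{B}$ and no state at a non-first position of any $\eta_f(s)$ in $\mathrm{im}(\nu)$), such that any two computations in $\mathrm{im}(\eta_i)\cup\mathrm{im}(\eta)\cup\mathrm{im}(\eta_f)$ sharing a transition or an internal state are equal. *)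

From HB Require Import structures.
From mathcomp Require Import all_boot.
From mathcomp Require Import boolp.
Set Implicit Arguments. Unset Strict Implicit. Unset Printing Implicit Defensive.

Inductive regex (T : Type) : Type :=
| Eps : regex T
| Atom : T -> regex T
| Star : regex T -> regex T
| Cat : regex T -> regex T -> regex T
| Alt : regex T -> regex T -> regex T.
Arguments Eps {T}.

Inductive matches {T : Type} : regex T -> seq T -> Prop :=
| m_eps : matches Eps [::]
| m_atom a : matches (Atom a) [:: a]
| m_star0 r : matches (Star r) [::]
| m_starS r u v : matches r u -> matches (Star r) v -> matches (Star r) (u ++ v)
| m_cat r1 r2 u v : matches r1 u -> matches r2 v -> matches (Cat r1 r2) (u ++ v)
| m_altl r1 r2 u : matches r1 u -> matches (Alt r1 r2) u
| m_altr r1 r2 u : matches r2 u -> matches (Alt r1 r2) u.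

Fixpoint rsize {T} (r : regex T) : nat :=
  match r with
  | Eps | Atom _ => 1
  | Star r => (rsize r).+1
  | Cat r1 r2 | Alt r1 r2 => (rsize r1 + rsize r2).+1
  end.

Fixpoint nstars {T} (r : regex T) : nat :=
  match r with
  | Eps | Atom _ => 0
  | Star r => (nstars r).+1
  | Cat r1 r2 | Alt r1 r2 => nstars r1 + nstars r2
  end.

Fixpoint atoms {T} (r : regex T) : seq T :=
  match r with
  | Eps => [::]
  | Atom a => [:: a]
  | Star r => atoms r
  | Cat r1 r2 | Alt r1 r2 => atoms r1 ++ atoms r2
  end.

Fixpoint lin_from {T} (n : nat) (r : regex T) : regex nat :=
  match r with
  | Eps => Eps
  | Atom _ => Atom n
  | Star r => Star (lin_from n r)
  | Cat r1 r2 => Cat (lin_from n r1) (lin_from (n + size (atoms r1)) r2)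
  | Alt r1 r2 => Alt (lin_from n r1) (lin_from (n + size (atoms r1)) r2)
  end.
Definition linearise {T} (r : regex T) : regex nat := lin_from 0 r.

Record automaton (S Q : finType) := Automaton {
  trans : {set Q * S * Q};
  init : {set Q};
  final : {set Q} }.

Section Automata.
Variables (S Q : finType) (A : automaton S Q).

Definition aedge : rel Q := fun p q => [exists a : S, (p, a, q) \in trans A].
Definition reach (p q : Q) : bool := connect aedge p q.
Definition useful (q : Q) : bool :=
  [exists i in init A, reach i q] && [exists f in final A, reach q f].
Definition trim : Prop := forall q : Q, useful q.

Definition trim_state := {q : Q | useful q}.
Definition trim_part : automaton S trim_state :=
  Automaton [set t : trim_state * S * trim_state | (val t.1.1, t.1.2, val t.2) \in trans A]
            [set q : trim_state | val q \in init A]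
            [set q : trim_state | val q \in final A].
End Automata.

Section Glushkov.
Variables (S : finType) (r : regex S).

Definition gl_pos := 'I_(size (atoms r)).
Definition gl_bar (al : gl_pos) : S := tnth (in_tuple (atoms r)) al.
Definition gl_first (b : gl_pos) : bool :=
  `[< exists u, matches (linearise r) (val b :: u) >].
Definition gl_last (al : gl_pos) : bool :=
  `[< exists u, matches (linearise r) (rcons u (val al)) >].
Definition gl_follow (al be : gl_pos) : bool :=
  `[< exists u v, matches (linearise r) (u ++ val al :: val be :: v) >].
Definition gl_eps : bool := `[< matches (linearise r) [::] >].

(* state None is the initial state i, Some al is the position al *)
Definition gl_full : automaton S (option gl_pos) :=
  Automaton
    [set t : option gl_pos * S * option gl_pos |
       match t with
       | (Some al, a, Some be) => (a == gl_bar be) && gl_follow al be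
       | (None, a, Some be) => (a == gl_bar be) && gl_first be
       | _ => false
       end]
    [set None]
    [set q : option gl_pos | match q with None => gl_eps | Some al => gl_last al end].

Definition Gl := trim_part gl_full.
End Glushkov.

(* a computation (q0, d1, q1, ..., dk, qk) is stored as (q0, [:: (a1,q1); ...; (ak,qk)]),
   with dj = (q_{j-1}, aj, qj) *)
Definition comp (S Q : Type) := (Q * seq (S * Q))%type.

Section Computations.
Variables (S Q : finType).
Implicit Types (c : comp S Q).

Fixpoint ctrans_from (p : Q) (s : seq (S * Q)) : seq (Q * S * Q) :=
  match s with
  | [::] => [::]
  | (a, q) :: s' => (p, a, q) :: ctrans_from q s'
  end.
Definition ctrans c := ctrans_from c.1 c.2.
Definition csrc c : Q := c.1.
Definition ctgt c : Q := last c.1 (map snd c.2).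
Definition clabel c : seq S := map fst c.2.
Definition is_comp (B : automaton S Q) c : Prop := all (fun t => t \in trans B) (ctrans c).
Definition cinternal c : seq Q := behead (belast c.1 (map snd c.2)).
Definition cnonlast c : seq Q := belast c.1 (map snd c.2).
Definition cnonfirst c : seq Q := map snd c.2.
End Computations.

Definition bij_on (D : finType) (X : {set D}) (W : Type) (P : W -> Prop) (f : D -> W) : Prop :=
  [/\ (forall x, x \in X -> P (f x)),
      {in X &, injective f} &
      (forall w, P w -> exists2 x, x \in X & f x = w)].

Definition topological_coding (SA QA SB QB : finType)
    (A : automaton SA QA) (B : automaton SB QB) : Prop :=
  exists (ui uf : seq SB) (lam : SA -> seq SB) (nu : QA -> QB),
    [/\ injective lam, (forall a, lam a != [::]) & injective nu] /\
    let inim (q : QB) := exists s, q = nu s in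
    let Winit (c : comp SB QB) := [/\ is_comp B c, csrc c \in init B & clabel c = ui] in
    let Wtrans (c : comp SB QB) :=
      [/\ is_comp B c, inim (csrc c) & exists a, clabel c = lam a] in
    let Wfinal (c : comp SB QB) := [/\ is_comp B c, inim (csrc c) & clabel c = uf] in
    exists (eta_i : QA -> comp SB QB) (eta : QA * SA * QA -> comp SB QB)
           (eta_f : QA -> comp SB QB),
      [/\ bij_on (init A) Winit eta_i,
          bij_on (trans A) Wtrans eta &
          bij_on (final A) Wfinal eta_f] /\
      [/\
          (forall s, s \in init A ->
             ctgt (eta_i s) = nu s /\
             (forall q, q \in cnonlast (eta_i s) -> ~ inim q)),
          (forall s a t, (s, a, t) \in trans A ->
             [/\ csrc (eta (s, a, t)) = nu s, clabel (eta (s, a, t)) = lam a,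
                 ctgt (eta (s, a, t)) = nu t &
                 (forall q, q \in cinternal (eta (s, a, t)) -> ~ inim q)]),
          (forall s, s \in final A ->
             ctgt (eta_f s) \in final B /\
             (forall q, q \in cnonfirst (eta_f s) -> ~ inim q)) &
          (let inimg (c : comp SB QB) :=
             (exists2 s, s \in init A & c = eta_i s) \/
             (exists2 d, d \in trans A & c = eta d) \/
             (exists2 s, s \in final A & c = eta_f s) in
           forall c1 c2, inimg c1 -> inimg c2 ->
             (exists t, t \in ctrans c1 /\ t \in ctrans c2) \/
             (exists q, q \in cinternal c1 /\ q \in cinternal c2) ->
             c1 = c2)].

From HB Require Import structures.
From mathcomp Require Import all_boot boolp zify.
Set Implicit Arguments. Unset Strict Implicit. Unset Printing Implicit Defensive.

(** Let [m = |Δ|] and number the transitions by [idx d < m]. The coding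
    expression is [(Σ_q entries q · Hub q · exits q)* · Stop], relabelled into
    [S + {tick, hash, dollar}]: [entries q] sums, over the transitions [d] into
    [q], the chains [In d 0 ... In d (idx d)], read [tick ... tick], and
    [exits q] sums, over the transitions [d = (q, a, _)], the chains
    [Out d 0 ... Out d (m - idx d)], read [a tick ... tick]; [Hub q] reads
    [hash], [Stop] reads [dollar], and [entries q] (resp. [exits q]) also
    contains [Eps] when [q] is initial (resp. final). The atoms of this
    expression are distinct, so the states of [Gl R] are its positions and its
    transitions are given by the first and follow sets.
    State [q] is coded by [Hub q], and a transition [d = (s, a, t)] by the
    word [a tick^(m+1) hash]: read from [Hub s], it must run through the
    [Out]-chain of [d] and then, across the star, through the [In]-chain of
    some [d'] with [(m - idx d) + (idx d' + 1) = m + 1], that is [d' = d],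
    ending at [Hub t]. Initial and final states are coded by [hash] read from
    the initial state of [Gl R] and by [dollar] read from [Hub q].
    Trimness of [A] keeps [entries q] and [exits q] from degenerating to [Eps],
    and puts every position on a coding path, so [Gl R] is already trim.
    Each transition and internal state of a coding path determines the element
    of [A] it codes, so distinct coding paths share neither. *)

(** * First, last and follow sets *)

Section GlushkovFunctions.
Variable T : eqType.
Implicit Types (r : regex T) (x y : T) (u v w : seq T).

Fixpoint nullable r : bool :=
  match r with
  | Eps | Star _ => true
  | Atom _ => false
  | Cat r1 r2 => nullable r1 && nullable r2
  | Alt r1 r2 => nullable r1 || nullable r2
  end.

Fixpoint firsts r : seq T :=
  match r with
  | Eps => [::]
  | Atom a => [:: a]
  | Star r => firsts r
  | Cat r1 r2 => firsts r1 ++ (if nullable r1 then firsts r2 else [::])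
  | Alt r1 r2 => firsts r1 ++ firsts r2
  end.

Fixpoint lasts r : seq T :=
  match r with
  | Eps => [::]
  | Atom a => [:: a]
  | Star r => lasts r
  | Cat r1 r2 => lasts r2 ++ (if nullable r2 then lasts r1 else [::])
  | Alt r1 r2 => lasts r1 ++ lasts r2
  end.

Fixpoint follows r x y : bool :=
  match r with
  | Eps | Atom _ => false
  | Star r => follows r x y || (x \in lasts r) && (y \in firsts r)
  | Cat r1 r2 => [|| follows r1 x y, follows r2 x y | (x \in lasts r1) && (y \in firsts r2)]
  | Alt r1 r2 => follows r1 x y || follows r2 x y
  end.

Lemma regex_inhabited r : exists w, matches r w.
Proof.
elim: r => [|a|r _|r1 [w1 H1] r2 [w2 H2]|r1 [w1 H1] r2 _].
- by exists [::]; constructor.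
- by exists [:: a]; constructor.
- by exists [::]; constructor.
- by exists (w1 ++ w2); constructor.
- by exists w1; constructor.
Qed.

Lemma nullableP r : matches r [::] <-> nullable r.
Proof.
split.
  suff gen w : matches r w -> w = [::] -> nullable r by move/gen; apply.
  elim=> //= [r1 r2 u v _ IH1 _ IH2|r1 r2 u _ IH|r1 r2 u _ IH].
  - by case: u IH1 => // IH1; case: v IH2 => // IH2 _; rewrite IH1 // IH2.
  - by move/IH ->.
  - by move/IH ->; rewrite orbT.
elim: r => [|a|r IH|r1 IH1 r2 IH2|r1 IH1 r2 IH2] //=.
- by constructor.
- by constructor.
- by case/andP=> /IH1 H1 /IH2 H2; exact: (m_cat H1 H2).
- by case/orP=> [/IH1|/IH2] H; constructor.
Qed.

Lemma firstsP r x : (exists u, matches r (x :: u)) <-> x \in firsts r.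
Proof.
split.
  case=> u0 M0.
  suff gen w : matches r w -> forall u, w = x :: u -> x \in firsts r by apply: (gen _ M0 u0).
  elim => //= [a u [-> _]|r1 u v _ IH1 _ IH2 u'|r1 r2 u v M1 IH1 _ IH2 u'
                      |r1 r2 u _ IH u'|r1 r2 u _ IH u'].
  - by rewrite inE.
  - case: u IH1 => [|b u] IH1 /= E; first exact: (IH2 u').
    by case: E => xb _; apply: (IH1 u); rewrite xb.
  - case: u M1 IH1 => [|b u] M1 IH1 /= E.
      by rewrite (nullableP _).1 //= mem_cat (IH2 u') ?orbT.
    by case: E => xb _; rewrite mem_cat (IH1 u) // xb.
  - by move=> E; rewrite mem_cat (IH u').
  - by move=> E; rewrite mem_cat (IH u') ?orbT.
elim: r => //= [a|r IH|r1 IH1 r2 IH2|r1 IH1 r2 IH2].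
- by rewrite inE => /eqP ->; exists [::]; constructor.
- by move/IH => [u Mu]; exists u; have := m_starS Mu (m_star0 r); rewrite cats0.
- rewrite mem_cat; case/orP.
    move/IH1 => [u Mu]; have [w Mw] := regex_inhabited r2.
    by exists (u ++ w); exact: (m_cat Mu Mw).
  case N: (nullable r1) => // /IH2 [u Mu]; exists u.
  exact: (m_cat ((nullableP r1).2 N) Mu).
- by rewrite mem_cat; case/orP=> [/IH1|/IH2] [u Mu]; exists u; constructor.
Qed.

Lemma lastsP r x : (exists u, matches r (rcons u x)) <-> x \in lasts r.
Proof.
split.
  case=> u0 M0.
  suff gen w : matches r w -> forall u, w = rcons u x -> x \in lasts r by apply: (gen _ M0 u0).
  elim => [u|a u|r1 u|r1 u v _ IH1 _ IH2 u'|r1 r2 u v _ IH1 M2 IH2 u'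
                  |r1 r2 u _ IH u'|r1 r2 u _ IH u'] /=.
  - by case: u.
  - by case: u => [[->]|b [|c u]] //=; rewrite inE.
  - by case: u.
  - case/lastP: v IH2 => [|v b] IH2; first by rewrite cats0; apply: IH1.
    by rewrite -rcons_cat => /rcons_inj [_ bx]; apply: (IH2 v); rewrite bx.
  - case/lastP: v M2 IH2 => [|v b] M2 IH2.
      by rewrite cats0 => E; rewrite mem_cat (nullableP _).1 //= (IH1 u') ?orbT.
    by rewrite -rcons_cat => /rcons_inj [_ bx]; rewrite mem_cat (IH2 v) // bx.
  - by move=> E; rewrite mem_cat (IH u').
  - by move=> E; rewrite mem_cat (IH u') ?orbT.
elim: r => //= [a|r IH|r1 IH1 r2 IH2|r1 IH1 r2 IH2].
- by rewrite inE => /eqP ->; exists [::]; constructor.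
- by move/IH => [u Mu]; exists u; have := m_starS Mu (m_star0 r); rewrite cats0.
- rewrite mem_cat; case/orP.
    move/IH2 => [u Mu]; have [w Mw] := regex_inhabited r1.
    by exists (w ++ u); rewrite rcons_cat; exact: (m_cat Mw Mu).
  case N: (nullable r2) => // /IH1 [u Mu]; exists u.
  by have := m_cat Mu ((nullableP r2).2 N); rewrite cats0.
- by rewrite mem_cat; case/orP=> [/IH1|/IH2] [u Mu]; exists u; constructor.
Qed.

Lemma cat_eq_split_pair u1 v1 u x y v : u1 ++ v1 = u ++ x :: y :: v ->
  [\/ exists v', u1 = u ++ x :: y :: v',
      exists u', v1 = u' ++ x :: y :: v |
      u1 = rcons u x /\ v1 = y :: v].
Proof.
elim: u1 u => [|a s IH] u /=; first by move=> ->; apply: Or32; exists u.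
case: u => [|b u] /=.
  case=> -> E; case: s IH E => [|c s'] IH /=; first by move=> ->; apply: Or33.
  by case=> -> _; apply: Or31; exists s'.
case=> -> /IH [[v' ->]|[u' ->]|[-> ->]].
- by apply: Or31; exists v'.
- by apply: Or32; exists u'.
- by apply: Or33.
Qed.

Lemma followsP r x y : (exists u v, matches r (u ++ x :: y :: v)) <-> follows r x y.
Proof.
split.
  case=> u0 [v0 M0].
  suff gen w : matches r w -> forall u v, w = u ++ x :: y :: v -> follows r x y.
    by apply: (gen _ M0 u0 v0).
  elim => [u v|a u v|r1 u v|r1 u v M1 IH1 M2 IH2 u' v'
                     |r1 r2 u v M1 IH1 M2 IH2 u' v'|r1 r2 u _ IH u' v'|r1 r2 u _ IH u' v'] /=.
  - by case: u.
  - by case: u => [|b [|c u]].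
  - by case: u.
  - case/cat_eq_split_pair => [[w' E]|[w' E]|[E1 E2]].
    + by rewrite (IH1 _ _ E).
    + exact: (IH2 _ _ E).
    + rewrite E1 in M1; rewrite E2 in M2.
      apply/orP; right; apply/andP; split; first by apply/lastsP; exists u'.
      by apply/(firstsP (Star r1)); exists v'.
  - case/cat_eq_split_pair => [[w' E]|[w' E]|[E1 E2]].
    + by rewrite (IH1 _ _ E).
    + by rewrite (IH2 _ _ E) orbT.
    + rewrite E1 in M1; rewrite E2 in M2.
      apply/or3P; apply: Or33; apply/andP; split; first by apply/lastsP; exists u'.
      by apply/firstsP; exists v'.
  - by move=> E; rewrite (IH _ _ E).
  - by move=> E; rewrite (IH _ _ E) orbT.
elim: r => //= [r IH|r1 IH1 r2 IH2|r1 IH1 r2 IH2].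
- case/orP.
    by move/IH => [u [v Mv]]; exists u, v; have := m_starS Mv (m_star0 r); rewrite cats0.
  case/andP=> /lastsP [u Mu] /firstsP [v Mv]; exists u, v.
  by have := m_starS Mu (m_starS Mv (m_star0 r)); rewrite cats0 cat_rcons.
- case/or3P.
  + move/IH1 => [u [v Mv]]; have [w Mw] := regex_inhabited r2; exists u, (v ++ w).
    by have := m_cat Mv Mw; rewrite -catA.
  + move/IH2 => [u [v Mv]]; have [w Mw] := regex_inhabited r1; exists (w ++ u), v.
    by have := m_cat Mw Mv; rewrite catA.
  + case/andP=> /lastsP [u Mu] /firstsP [v Mv]; exists u, v.
    by have := m_cat Mu Mv; rewrite cat_rcons.
- by case/orP=> [/IH1|/IH2] [u [v Mv]]; exists u, v; constructor.
Qed.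

Lemma firsts_sub r : {subset firsts r <= atoms r}.
Proof.
elim: r => [|a|r IH|r1 IH1 r2 IH2|r1 IH1 r2 IH2] z //=; rewrite ?mem_cat.
- exact: IH.
- by case/orP=> [/IH1 ->//|]; case: nullable => // /IH2 ->; rewrite orbT.
- by case/orP=> [/IH1 ->//|/IH2 ->]; rewrite orbT.
Qed.

Lemma lasts_sub r : {subset lasts r <= atoms r}.
Proof.
elim: r => [|a|r IH|r1 IH1 r2 IH2|r1 IH1 r2 IH2] z //=; rewrite ?mem_cat.
- exact: IH.
- by case/orP=> [/IH2 ->|]; [rewrite orbT|case: nullable => // /IH1 ->].
- by case/orP=> [/IH1 ->//|/IH2 ->]; rewrite orbT.
Qed.

Lemma follows_atoms r x y : follows r x y -> (x \in atoms r) && (y \in atoms r).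
Proof.
elim: r => [|a|r IH|r1 IH1 r2 IH2|r1 IH1 r2 IH2] //=; rewrite ?mem_cat.
- by case/orP=> [/IH //|/andP [/lasts_sub -> /firsts_sub ->]].
- case/or3P=> [/IH1/andP[->->]//|/IH2/andP[->->]|/andP [/lasts_sub -> /firsts_sub ->]];
  by rewrite ?orbT.
- by case/orP=> [/IH1/andP[->->]//|/IH2/andP[->->]]; rewrite ?orbT.
Qed.

End GlushkovFunctions.

(** * Relabelling, alternatives and chains *)

Fixpoint rmap (A B : Type) (f : A -> B) (r : regex A) : regex B :=
  match r with
  | Eps => Eps
  | Atom a => Atom (f a)
  | Star r => Star (rmap f r)
  | Cat r1 r2 => Cat (rmap f r1) (rmap f r2)
  | Alt r1 r2 => Alt (rmap f r1) (rmap f r2)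
  end.

Fixpoint neps (T : Type) (r : regex T) : nat :=
  match r with
  | Eps => 1
  | Atom _ => 0
  | Star r => neps r
  | Cat r1 r2 | Alt r1 r2 => neps r1 + neps r2
  end.

Lemma rsize_count (T : Type) (r : regex T) :
  (rsize r).+1 = 2 * (size (atoms r) + neps r) + nstars r.
Proof. by elim: r => //= [r ->|r1 IH1 r2 IH2|r1 IH1 r2 IH2]; rewrite ?size_cat; lia. Qed.

Section RegexMap.
Variables (A B : Type) (f : A -> B).
Implicit Type r : regex A.

Lemma atoms_rmap r : atoms (rmap f r) = map f (atoms r).
Proof. by elim: r => //= [r1 -> r2 ->|r1 -> r2 ->]; rewrite map_cat. Qed.

Lemma rsize_rmap r : rsize (rmap f r) = rsize r.
Proof. by elim: r => //= [r1 ->|r1 -> r2 ->|r1 -> r2 ->]. Qed.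

Lemma nstars_rmap r : nstars (rmap f r) = nstars r.
Proof. by elim: r => //= [r1 ->|r1 -> r2 ->|r1 -> r2 ->]. Qed.

Lemma rmap_comp (C : Type) (g : B -> C) r : rmap g (rmap f r) = rmap (g \o f) r.
Proof. by elim: r => //= [r1 ->|r1 -> r2 ->|r1 -> r2 ->]. Qed.

End RegexMap.

Section RegexMapEq.
Variables (A B : eqType) (f : A -> B).
Implicit Type r : regex A.

Lemma eq_in_rmap (C : Type) (g h : A -> C) r :
  {in atoms r, g =1 h} -> rmap g r = rmap h r.
Proof.
elim: r => //= [a|r IH|r1 IH1 r2 IH2|r1 IH1 r2 IH2] gh.
- by rewrite gh // inE.
- by rewrite IH.
- by rewrite IH1 ?IH2 // => z zr; apply: gh; rewrite mem_cat zr ?orbT.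
- by rewrite IH1 ?IH2 // => z zr; apply: gh; rewrite mem_cat zr ?orbT.
Qed.

Lemma rmapK (g : B -> A) r : {in atoms r, cancel f g} -> rmap g (rmap f r) = r.
Proof.
move=> fK; rewrite rmap_comp (eq_in_rmap (h := id)) //.
by elim: {fK} r => //= [r ->|r1 -> r2 ->|r1 -> r2 ->].
Qed.

Lemma nullable_rmap r : nullable (rmap f r) = nullable r.
Proof. by elim: r => //= [r1 -> r2 ->|r1 -> r2 ->]. Qed.

Lemma firsts_rmap r : firsts (rmap f r) = map f (firsts r).
Proof.
elim: r => //= [r1 -> r2 ->|r1 -> r2 ->]; rewrite map_cat ?nullable_rmap //.
by case: nullable.
Qed.

Lemma lasts_rmap r : lasts (rmap f r) = map f (lasts r).
Proof.
elim: r => //= [r1 -> r2 ->|r1 -> r2 ->]; rewrite map_cat ?nullable_rmap //.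
by case: nullable.
Qed.

Lemma follows_rmap r x y : follows r x y -> follows (rmap f r) (f x) (f y).
Proof.
elim: r => //= [r IH|r1 IH1 r2 IH2|r1 IH1 r2 IH2].
- by case/orP=> [/IH ->//|/andP [xl yf]]; rewrite lasts_rmap firsts_rmap !map_f ?orbT.
- case/or3P=> [/IH1 ->//|/IH2 ->|/andP [xl yf]]; rewrite ?orbT //.
  by rewrite lasts_rmap firsts_rmap !map_f ?orbT.
- by case/orP=> [/IH1 ->//|/IH2 ->]; rewrite orbT.
Qed.

Lemma lin_from_rmap (C : Type) (g : A -> C) r n : uniq (atoms r) ->
  lin_from n (rmap g r) = rmap (fun x => n + index x (atoms r)) r.
Proof.
elim: r n => //= [a n _|r IH n U|r1 IH1 r2 IH2 n U|r1 IH1 r2 IH2 n U].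
- by rewrite eqxx addn0.
- by rewrite IH.
- move: U; rewrite cat_uniq => /and3P [U1 D U2].
  rewrite IH1 // IH2 // atoms_rmap size_map; congr Cat; apply: eq_in_rmap => z zr.
    by rewrite index_cat zr.
  have zr1 : z \notin atoms r1 by apply: contra D => zr1; apply/hasP; exists z.
  by rewrite index_cat (negbTE zr1) addnA.
- move: U; rewrite cat_uniq => /and3P [U1 D U2].
  rewrite IH1 // IH2 // atoms_rmap size_map; congr Alt; apply: eq_in_rmap => z zr.
    by rewrite index_cat zr.
  have zr1 : z \notin atoms r1 by apply: contra D => zr1; apply/hasP; exists z.
  by rewrite index_cat (negbTE zr1) addnA.
Qed.

End RegexMapEq.

Lemma uniq_flatten_owned (I T : eqType) (f : I -> seq T) (owner : T -> option I) s :
  uniq s -> {in s, forall i, uniq (f i)} ->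
  {in s, forall i, {in f i, forall x, owner x = Some i}} -> uniq (flatten (map f s)).
Proof.
elim: s => //= i s IH /andP [i_s s_uniq] f_uniq f_owned.
rewrite cat_uniq f_uniq ?mem_head // IH // => [|j js|j js]; last first.
- by apply: f_owned; rewrite inE js orbT.
- by apply: f_uniq; rewrite inE js orbT.
rewrite andbT; apply/hasPn => x /flatten_mapP [j js xj]; apply/negP => xi.
have := f_owned i (mem_head _ _) x xi; rewrite (f_owned j _ x xj) ?inE ?js ?orbT // => -[ji].
by move: i_s; rewrite -ji js.
Qed.

Fixpoint alts (T : Type) (l : seq (regex T)) : regex T :=
  match l with
  | [::] => Eps
  | r :: l' => if l' is [::] then r else Alt r (alts l')
  end.

Fixpoint chain (T : Type) (C : nat -> T) (a L : nat) : regex T :=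
  match L with
  | 0 => Atom (C a)
  | L'.+1 => Cat (Atom (C a)) (chain C a.+1 L')
  end.

Section AltsChains.
Variable T : eqType.
Implicit Type l : seq (regex T).

Lemma atoms_alts l : atoms (alts l) = flatten (map (@atoms T) l).
Proof. by elim: l => //= r [|r' l] IH /=; rewrite ?cats0 ?IH. Qed.
Lemma nullable_alts l : nullable (alts l) = nilp l || has (@nullable T) l.
Proof. by elim: l => //= r [|r' l] IH /=; rewrite ?orbF ?IH. Qed.
Lemma firsts_alts l : firsts (alts l) = flatten (map (@firsts T) l).
Proof. by elim: l => //= r [|r' l] IH /=; rewrite ?cats0 ?IH. Qed.
Lemma lasts_alts l : lasts (alts l) = flatten (map (@lasts T) l).
Proof. by elim: l => //= r [|r' l] IH /=; rewrite ?cats0 ?IH. Qed.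
Lemma firsts_alts_mapP (I : eqType) (f : I -> regex T) (s : seq I) y :
  reflect (exists2 i, i \in s & y \in firsts (f i)) (y \in firsts (alts (map f s))).
Proof. by rewrite firsts_alts -map_comp; apply: flatten_mapP. Qed.
Lemma lasts_alts_mapP (I : eqType) (f : I -> regex T) (s : seq I) y :
  reflect (exists2 i, i \in s & y \in lasts (f i)) (y \in lasts (alts (map f s))).
Proof. by rewrite lasts_alts -map_comp; apply: flatten_mapP. Qed.
Lemma follows_alts l x y : follows (alts l) x y = has (fun r => follows r x y) l.
Proof. by elim: l => //= r [|r' l] IH /=; rewrite ?orbF ?IH. Qed.
Lemma follows_alts_map (I : Type) (f : I -> regex T) (s : seq I) x y :
  follows (alts (map f s)) x y = has (fun i => follows (f i) x y) s.
Proof. by rewrite follows_alts has_map. Qed.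
Lemma nstars_alts l : nstars (alts l) = sumn (map (@nstars T) l).
Proof. by elim: l => //= r [|r' l] IH /=; rewrite ?addn0 ?IH. Qed.
Lemma neps_alts l : neps (alts l) = if nilp l then 1 else sumn (map (@neps T) l).
Proof. by elim: l => //= r [|r' l] IH /=; rewrite ?addn0 ?IH. Qed.

Variable C : nat -> T.

Lemma nullable_chain a L : nullable (chain C a L) = false.
Proof. by elim: L a => //= L IH a; rewrite IH. Qed.
Lemma firsts_chain a L : firsts (chain C a L) = [:: C a].
Proof. by case: L. Qed.
Lemma lasts_chain a L : lasts (chain C a L) = [:: C (a + L)].
Proof.
elim: L a => /= [|L IH] a; first by rewrite addn0.
by rewrite IH nullable_chain cats0 addSnnS.
Qed.
Lemma atoms_chain a L : atoms (chain C a L) = map C (iota a L.+1).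
Proof. by elim: L a => //= L IH a; rewrite IH. Qed.
Lemma follows_chain a L x y :
  follows (chain C a L) x y = has (fun k => (x == C k) && (y == C k.+1)) (iota a L).
Proof. by elim: L a => //= L IH a; rewrite IH firsts_chain !inE orbC. Qed.
Lemma nstars_chain a L : nstars (chain C a L) = 0.
Proof. by elim: L a => //= L IH a; rewrite IH. Qed.
Lemma neps_chain a L : neps (chain C a L) = 0.
Proof. by elim: L a => //= L IH a; rewrite IH. Qed.

End AltsChains.

Section ChainFamily.
Variables (D : Type) (T : eqType) (C : D -> nat -> T) (L : D -> nat).

Definition chains (l : seq D) (b : bool) : regex T :=
  alts (map (fun d => chain (C d) 0 (L d)) l ++ (if b then [:: Eps] else [::])).

Lemma nullable_chains l b : nullable (chains l b) = b || nilp l.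
Proof.
rewrite /chains nullable_alts has_cat.
have -> : has (@nullable T) [seq chain (C d) 0 (L d) | d <- l] = false.
  by elim: l => //= d l ->; rewrite nullable_chain.
by case: b; case: l.
Qed.

Lemma firsts_chains l b : firsts (chains l b) = [seq C d 0 | d <- l].
Proof.
rewrite /chains firsts_alts map_cat flatten_cat -map_comp.
rewrite (eq_map (g := fun d => [:: C d 0])) => [|d]; last exact: firsts_chain.
by rewrite flatten_map1; case: b; rewrite /= cats0.
Qed.

Lemma lasts_chains l b : lasts (chains l b) = [seq C d (L d) | d <- l].
Proof.
rewrite /chains lasts_alts map_cat flatten_cat -map_comp.
rewrite (eq_map (g := fun d => [:: C d (L d)])) => [|d]; last exact: lasts_chain.
by rewrite flatten_map1; case: b; rewrite /= cats0.
Qed.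

Lemma atoms_chains l b : atoms (chains l b) = [seq C d k | d <- l, k <- iota 0 (L d).+1].
Proof.
rewrite /chains atoms_alts map_cat flatten_cat -map_comp.
rewrite (eq_map (g := fun d => map (C d) (iota 0 (L d).+1))) => [|d]; last exact: atoms_chain.
by case: b; rewrite /= cats0.
Qed.

Lemma follows_chains l b x y : follows (chains l b) x y =
  has (fun d => has (fun k => (x == C d k) && (y == C d k.+1)) (iota 0 (L d))) l.
Proof.
rewrite /chains follows_alts has_cat has_map.
rewrite (eq_has (a2 := fun d => has (fun k => (x == C d k) && (y == C d k.+1)) (iota 0 (L d)))).
  by case: b; rewrite /= orbF.
by move=> d; rewrite /= follows_chain.
Qed.

Lemma nstars_chains l b : nstars (chains l b) = 0.
Proof.
rewrite /chains nstars_alts map_cat sumn_cat.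
have -> : sumn [seq nstars r | r <- [seq chain (C d) 0 (L d) | d <- l]] = 0.
  by elim: l => //= d l ->; rewrite nstars_chain.
by case: b.
Qed.

Lemma neps_chains l b : neps (chains l b) <= 1.
Proof.
rewrite /chains neps_alts; case: nilp => //; rewrite map_cat sumn_cat.
have -> : sumn [seq neps r | r <- [seq chain (C d) 0 (L d) | d <- l]] = 0.
  by elim: l => //= d l ->; rewrite neps_chain.
by case: b.
Qed.

End ChainFamily.

(** * The Glushkov automaton of a relabelled linear expression *)

Section RelabelledLinearGlushkov.
Variables (T : eqType) (S : finType) (letter : T -> S) (E : regex T) (x0 : T).
Hypotheses (uniq_E : uniq (atoms E)) (x0_E : x0 \in atoms E).
Local Notation R := (rmap letter E).
Local Notation pos := (gl_pos R).

Fact size_atoms_relabel_gt0 : 0 < size (atoms R).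
Proof. by rewrite atoms_rmap size_map; case: (atoms E) x0_E. Qed.

Definition atom_at (al : pos) : T := nth x0 (atoms E) al.
Definition pos_of (y : T) : pos :=
  insubd (Ordinal size_atoms_relabel_gt0) (index y (atoms E)).

Lemma atom_at_lt (al : pos) : al < size (atoms E).
Proof. by rewrite -(size_map letter) -atoms_rmap ltn_ord. Qed.

Lemma atom_at_mem al : atom_at al \in atoms E.
Proof. exact/mem_nth/atom_at_lt. Qed.

Lemma index_atom_at al : index (atom_at al) (atoms E) = al.
Proof. by rewrite index_uniq ?atom_at_lt. Qed.

Lemma atom_atK : cancel atom_at pos_of.
Proof. by move=> al; apply: val_inj; rewrite /pos_of val_insubd index_atom_at ltn_ord. Qed.

Lemma pos_ofK : {in atoms E, cancel pos_of atom_at}.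
Proof.
move=> y yE; rewrite /atom_at /pos_of val_insubd.
have -> : index y (atoms E) < size (atoms R) by rewrite atoms_rmap size_map index_mem.
exact: nth_index.
Qed.

Lemma linearise_relabel : linearise R = rmap (index^~ (atoms E)) E.
Proof. exact: lin_from_rmap. Qed.

Lemma unlinearise_relabel : rmap (nth x0 (atoms E)) (linearise R) = E.
Proof. by rewrite linearise_relabel rmapK // => y yE; rewrite nth_index. Qed.

Lemma gl_firstE al : gl_first al = (atom_at al \in firsts E).
Proof.
rewrite /gl_first; apply/asboolP/idP => [/firstsP|al_first].
  by move/(map_f (nth x0 (atoms E))); rewrite -firsts_rmap unlinearise_relabel.
apply/firstsP; rewrite linearise_relabel firsts_rmap -[X in X \in _](index_atom_at al).
exact: map_f.
Qed.

Lemma gl_lastE al : gl_last al = (atom_at al \in lasts E).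
Proof.
rewrite /gl_last; apply/asboolP/idP => [/lastsP|al_last].
  by move/(map_f (nth x0 (atoms E))); rewrite -lasts_rmap unlinearise_relabel.
apply/lastsP; rewrite linearise_relabel lasts_rmap -[X in X \in _](index_atom_at al).
exact: map_f.
Qed.

Lemma gl_followE al be : gl_follow al be = follows E (atom_at al) (atom_at be).
Proof.
rewrite /gl_follow; apply/asboolP/idP => [/followsP|/(follows_rmap (index^~ (atoms E)))].
  by move/(follows_rmap (nth x0 (atoms E))); rewrite unlinearise_relabel.
by rewrite !index_atom_at -linearise_relabel => /followsP.
Qed.

Lemma gl_epsE : gl_eps R = nullable E.
Proof.
rewrite /gl_eps linearise_relabel; apply/asboolP/idP => [/nullableP|].
  by rewrite nullable_rmap.
by rewrite -(nullable_rmap (index^~ (atoms E))) => /nullableP.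
Qed.

Lemma gl_barE al : gl_bar al = letter (atom_at al).
Proof.
rewrite /gl_bar (tnth_nth (letter x0)) /atom_at /=.
have := atom_at_lt al; move: (nat_of_ord al) => k k_lt.
by rewrite atoms_rmap (nth_map x0).
Qed.

Definition step (o : option T) (y : T) : bool :=
  if o is Some x then follows E x y else y \in firsts E.

Fixpoint walk (o : option T) (ys : seq T) : bool :=
  if ys is y :: ys' then step o y && walk (Some y) ys' else true.

Fixpoint steps (o : option T) (ys : seq T) : seq (option T * T) :=
  if ys is y :: ys' then (o, y) :: steps (Some y) ys' else [::].

Lemma walk_cons o y ys : walk o (y :: ys) = step o y && walk (Some y) ys.
Proof. by []. Qed.

Lemma steps_cat o ys zs :
  steps o (ys ++ zs) = steps o ys ++ steps (last o (map Some ys)) zs.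
Proof. by elim: ys o => //= y ys IH o; rewrite IH. Qed.

Lemma steps_rcons o ys z :
  steps o (rcons ys z) = rcons (steps o ys) (last o (map Some ys), z).
Proof. by rewrite -!cats1 steps_cat. Qed.

Lemma mem_steps o ys p : p \in steps o ys ->
  (p.1 = o \/ exists2 y, y \in ys & p.1 = Some y) /\ p.2 \in ys.
Proof.
elim: ys o => //= y ys IH o /predU1P [->|/IH [[->|[z zs ->]] pys]].
- by split; [left|rewrite mem_head].
- by split; [right; exists y; rewrite ?mem_head|rewrite inE pys orbT].
- by split; [right; exists z; rewrite // inE zs orbT|rewrite inE pys orbT].
Qed.

Lemma step_atoms o y : step o y -> y \in atoms E.
Proof. by case: o => [x /follows_atoms/andP []|/firsts_sub]. Qed.

Lemma walk_atoms o ys : walk o ys -> all (mem (atoms E)) ys.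
Proof. by elim: ys o => //= y ys IH o /andP [/step_atoms -> /IH]. Qed.

Lemma gl_full_trans p a q : ((p, a, q) \in trans (gl_full R)) =
  if q is Some be then (a == letter (atom_at be)) && step (omap atom_at p) (atom_at be)
  else false.
Proof.
by rewrite inE; case: p q => [al|] [be|] //=; rewrite gl_barE ?gl_firstE ?gl_followE.
Qed.

Lemma step_aedge o y : step o y -> aedge (gl_full R) (omap pos_of o) (Some (pos_of y)).
Proof.
move=> oy; apply/existsP; exists (letter y).
rewrite gl_full_trans pos_ofK ?(step_atoms oy) // eqxx /=.
by case: o oy => //= x oy; rewrite pos_ofK //; case/andP: (follows_atoms oy).
Qed.

Lemma walk_connect o ys : walk o ys ->
  connect (aedge (gl_full R)) (omap pos_of o) (omap pos_of (last o (map Some ys))).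
Proof.
elim: ys o => [|y ys IH] o /=; first by rewrite connect0.
by case/andP=> /step_aedge/connect1 oy /IH; apply: connect_trans oy.
Qed.

Lemma walk_connect_mem o ys y : walk o ys -> y \in ys ->
  connect (aedge (gl_full R)) (omap pos_of o) (Some (pos_of y)) /\
  connect (aedge (gl_full R)) (Some (pos_of y)) (omap pos_of (last o (map Some ys))).
Proof.
elim: ys o => // z ys IH o /= /andP [oz zys]; rewrite inE => /predU1P [->|y_ys].
  by split; [apply/connect1/step_aedge|apply: walk_connect].
have [oy ylast] := IH _ zys y_ys; split => //.
exact: connect_trans (connect1 (step_aedge oz)) oy.
Qed.

Section TrimGlushkov.
Hypothesis useful_gl : forall q, useful (gl_full R) q.
Local Notation state := (trim_state (gl_full R)).

Definition state_of (o : option T) : state := exist _ (omap pos_of o) (useful_gl _).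
Definition atom_of (q : state) : option T := omap atom_at (val q).
Definition on_atoms (o : option T) : bool := if o is Some y then y \in atoms E else true.

Lemma atom_ofK : cancel atom_of state_of.
Proof. by case=> [[al|] q_useful]; apply: val_inj; rewrite //= atom_atK. Qed.

Lemma state_ofK o : on_atoms o -> atom_of (state_of o) = o.
Proof. by case: o => //= y yE; rewrite /atom_of /= pos_ofK. Qed.

Lemma Gl_trans p a q : ((p, a, q) \in trans (Gl R)) =
  if atom_of q is Some y then (a == letter y) && step (atom_of p) y else false.
Proof. by rewrite /Gl inE /= gl_full_trans; case: q => [[be|] ?]. Qed.

Lemma Gl_init q : (q \in init (Gl R)) = (atom_of q == None).
Proof. by rewrite /Gl !inE; case: q => [[al|] ?]. Qed.

Lemma Gl_final q : (q \in final (Gl R)) =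
  if atom_of q is Some y then y \in lasts E else nullable E.
Proof. by rewrite /Gl !inE; case: q => [[al|] ?]; rewrite /= ?gl_lastE ?gl_epsE. Qed.

Definition walk_comp (o : option T) (ys : seq T) : comp S state :=
  (state_of o, [seq (letter y, state_of (Some y)) | y <- ys]).

Lemma Gl_ctrans_fromP p s : all (fun t => t \in trans (Gl R)) (ctrans_from p s) <->
  exists2 ys, s = [seq (letter y, state_of (Some y)) | y <- ys] & walk (atom_of p) ys.
Proof.
elim: s p => [|[a q] s IH] p; first by split => // _; exists [::].
rewrite -[all _ _]/(((p, a, q) \in trans (Gl R)) && all _ (ctrans_from q s)) Gl_trans.
split.
  case Eq: (atom_of q) => [y|] //.
  move=> /andP [/andP [/eqP ay py] /IH [ys sE ys_walk]].
  by exists (y :: ys); rewrite /= ?py -?Eq // ay sE atom_ofK.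
case=> [[|y ys] // [-> -> sE] /andP [py ys_walk]].
have y_E := step_atoms py.
rewrite (state_ofK (o := Some y)) // eqxx py !andTb; apply/IH.
by exists ys; rewrite ?state_ofK.
Qed.

Lemma is_comp_walk o ys : on_atoms o -> walk o ys -> is_comp (Gl R) (walk_comp o ys).
Proof. by move=> o_E ys_walk; apply/Gl_ctrans_fromP; exists ys; rewrite ?state_ofK. Qed.

Lemma is_compP c : is_comp (Gl R) c ->
  exists2 ys, c = walk_comp (atom_of (csrc c)) ys & walk (atom_of (csrc c)) ys.
Proof.
case: c => p s /Gl_ctrans_fromP [ys /= sE ys_walk].
by exists ys; rewrite // /walk_comp sE atom_ofK.
Qed.

Lemma csrc_walk o ys : csrc (walk_comp o ys) = state_of o.
Proof. by []. Qed.

Lemma clabel_walk o ys : clabel (walk_comp o ys) = map letter ys.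
Proof. by rewrite /clabel -map_comp. Qed.

Lemma ctgt_walk y ys : ctgt (walk_comp (Some y) ys) = state_of (Some (last y ys)).
Proof. by rewrite /ctgt /= -map_comp (last_map (fun y => state_of (Some y))). Qed.

Lemma cinternal_walk o ys z :
  cinternal (walk_comp o (rcons ys z)) = [seq state_of (Some y) | y <- ys].
Proof. by rewrite /cinternal /= -map_comp map_rcons belast_rcons. Qed.

Lemma ctrans_walk o ys : ctrans (walk_comp o ys) =
  [seq (state_of p.1, letter p.2, state_of (Some p.2)) | p <- steps o ys].
Proof. by rewrite /ctrans /=; elim: ys o => //= y ys IH o; rewrite IH. Qed.

Lemma walk_comp_inj o o' ys ys' : all (mem (atoms E)) ys -> all (mem (atoms E)) ys' ->
  walk_comp o ys = walk_comp o' ys' -> ys = ys'.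
Proof.
have inj : {in atoms E &, injective (fun y => (letter y, state_of (Some y)))}.
  by move=> y z yE zE /= [_ yz]; rewrite -(pos_ofK yE) yz pos_ofK.
by move=> ysE ys'E [_]; apply: (inj_in_map inj).
Qed.

End TrimGlushkov.
End RelabelledLinearGlushkov.

(** * The coding expression *)

Inductive role (Q D : Type) := Hub of Q | Out of D & nat | In of D & nat | Stop.
Arguments Hub {Q D}.
Arguments Out {Q D}.
Arguments In {Q D}.
Arguments Stop {Q D}.

Definition role_sum Q D (x : role Q D) : Q + D * nat + D * nat + unit :=
  match x with
  | Hub q => inl (inl (inl q))
  | Out d k => inl (inl (inr (d, k)))
  | In d k => inl (inr (d, k))
  | Stop => inr tt
  end.

Definition sum_role Q D (x : Q + D * nat + D * nat + unit) : role Q D :=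
  match x with
  | inl (inl (inl q)) => Hub q
  | inl (inl (inr (d, k))) => Out d k
  | inl (inr (d, k)) => In d k
  | inr _ => Stop
  end.

Lemma role_sumK Q D : cancel (@role_sum Q D) (@sum_role Q D).
Proof. by case. Qed.

HB.instance Definition _ (Q D : eqType) := Equality.copy (role Q D) (can_type (@role_sumK Q D)).

Section Construction.
Variables (S Q : finType) (A : automaton S Q).
Hypothesis trimA : trim A.
Local Notation D := (Q * S * Q)%type.
Local Notation role := (role Q D).
Implicit Types (s t : Q) (d : D) (x y : role) (ys : seq role).

Definition tick : S + option bool := inr None.
Definition hash : S + option bool := inr (Some true).
Definition dollar : S + option bool := inr (Some false).

Definition ds : seq D := enum (trans A).
Definition m := size ds.
Definition idx d := index d ds.

Definition letter x : S + option bool :=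
  match x with
  | Hub _ => hash
  | Out d 0 => inl d.1.2
  | Out _ _ | In _ _ => tick
  | Stop => dollar
  end.

Definition entries t : regex role :=
  chains In idx [seq d <- ds | d.2 == t] (t \in init A).
Definition exits t : regex role :=
  chains Out (fun d => m - idx d) [seq d <- ds | d.1.1 == t] (t \in final A).
Definition block t : regex role := Cat (Cat (entries t) (Atom (Hub t))) (exits t).
Definition blocks : regex role := alts (map block (enum Q)).
Definition code : regex role := Cat (Star blocks) (Atom Stop).
Arguments code : simpl never.
Definition coding_regex : regex (S + option bool) := rmap letter code.

Lemma mem_ds d : (d \in ds) = (d \in trans A).
Proof. exact: mem_enum. Qed.

Lemma card_trans : #|trans A| = m.
Proof. by rewrite cardE. Qed.

Lemma idx_lt d : d \in ds -> idx d < m.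
Proof. by rewrite -index_mem. Qed.

Lemma idx_inj : {in ds &, injective idx}.
Proof. by move=> d d' dd dd' E; rewrite -(nth_index d dd) -(nth_index d dd') -/(idx _) E. Qed.

Lemma trim_has_in t : t \notin init A -> exists2 d, d \in ds & d.2 = t.
Proof.
have /andP [/existsP [i /andP [iI /connectP [p p_path ->]]] _] := trimA t.
case/lastP: p p_path => [|p z] p_path; first by rewrite iI.
rewrite last_rcons => _; move: p_path; rewrite rcons_path => /andP [_ /existsP [a a_trans]].
by exists (last i p, a, z); rewrite ?mem_ds.
Qed.

Lemma trim_has_out t : t \notin final A -> exists2 d, d \in ds & d.1.1 = t.
Proof.
have /andP [_ /existsP [f /andP [fF /connectP [p p_path fE]]]] := trimA t.
case: p p_path fE => [_ /= <-|z p /andP [/existsP [a a_trans] _] _ _]; first by rewrite fF.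
by exists (t, a, z); rewrite ?mem_ds.
Qed.

Lemma nullable_entries t : nullable (entries t) = (t \in init A).
Proof.
rewrite /entries nullable_chains; case: (boolP (t \in init A)) => //= /trim_has_in [d dd <-].
by apply: negbTE; rewrite /nilp size_filter -lt0n -has_count; apply/hasP; exists d.
Qed.

Lemma nullable_exits t : nullable (exits t) = (t \in final A).
Proof.
rewrite /exits nullable_chains; case: (boolP (t \in final A)) => //= /trim_has_out [d dd <-].
by apply: negbTE; rewrite /nilp size_filter -lt0n -has_count; apply/hasP; exists d.
Qed.

Lemma firsts_block t : firsts (block t) =
  [seq In d 0 | d <- [seq d <- ds | d.2 == t]] ++ (if t \in init A then [:: Hub t] else [::]).
Proof. by rewrite /block /= nullable_entries firsts_chains andbF cats0. Qed.

Lemma lasts_block t : lasts (block t) =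
  [seq Out d (m - idx d) | d <- [seq d <- ds | d.1.1 == t]] ++
  (if t \in final A then [:: Hub t] else [::]).
Proof. by rewrite /block /= nullable_exits lasts_chains. Qed.

Lemma follows_block t x y : follows (block t) x y =
  [|| follows (entries t) x y, (x \in lasts (entries t)) && (y == Hub t),
      follows (exits t) x y | (x == Hub t) && (y \in firsts (exits t))].
Proof. by rewrite /block /= !inE -!orbA. Qed.

Lemma firsts_code : firsts code = firsts blocks ++ [:: Stop].
Proof. by []. Qed.

Lemma lasts_code : lasts code = [:: Stop].
Proof. by []. Qed.

Lemma nullable_code : nullable code = false.
Proof. by []. Qed.

Lemma follows_code x y :
  follows code x y = follows blocks x y || (x \in lasts blocks) && (y \in firsts code).
Proof.
rewrite firsts_code /code /= mem_cat !inE.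
by case: (follows blocks x y); case: (x \in lasts blocks); case: (y \in firsts blocks).
Qed.

Definition first_role y : Prop :=
  [\/ exists2 d, d \in ds & y = In d 0, exists2 t, t \in init A & y = Hub t | y = Stop].

Definition last_role x : Prop :=
  (exists2 d, d \in ds & x = Out d (m - idx d)) \/ (exists2 t, t \in final A & x = Hub t).

Definition next_role x y : Prop :=
  match x with
  | Hub s => (exists2 d, d \in ds & d.1.1 = s /\ y = Out d 0) \/ (s \in final A /\ first_role y)
  | Out d k => d \in ds /\ ((k < m - idx d /\ y = Out d k.+1) \/ (k = m - idx d /\ first_role y))
  | In d k => d \in ds /\ ((k < idx d /\ y = In d k.+1) \/ (k = idx d /\ y = Hub d.2))
  | Stop => False
  end.

Lemma firsts_codeP y : y \in firsts code <-> first_role y.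
Proof.
rewrite firsts_code mem_cat inE; split.
  case/orP => [/firsts_alts_mapP [t _] | /eqP ->]; last exact: Or33.
  rewrite firsts_block mem_cat => /orP [/mapP [d] | ].
    by rewrite mem_filter => /andP [_ dd] ->; apply: Or31; exists d.
  by case: ifP => // tI; rewrite inE => /eqP ->; apply: Or32; exists t.
case=> [[d dd ->]|[t tI ->]|->]; last by rewrite eqxx orbT.
  apply/orP; left; apply/firsts_alts_mapP; exists d.2; first by rewrite mem_enum.
  by rewrite firsts_block mem_cat map_f // mem_filter eqxx.
apply/orP; left; apply/firsts_alts_mapP; exists t; first by rewrite mem_enum.
by rewrite firsts_block mem_cat tI mem_head orbT.
Qed.

Lemma lasts_blocksP x : x \in lasts blocks <-> last_role x.
Proof.
split.
  case/lasts_alts_mapP => [t _].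
  rewrite lasts_block mem_cat => /orP [/mapP [d] | ].
    by rewrite mem_filter => /andP [_ dd] ->; left; exists d.
  by case: ifP => // tF; rewrite inE => /eqP ->; right; exists t.
case=> [[d dd ->]|[t tF ->]].
  apply/lasts_alts_mapP; exists d.1.1; first by rewrite mem_enum.
  by rewrite lasts_block mem_cat map_f // mem_filter eqxx.
apply/lasts_alts_mapP; exists t; first by rewrite mem_enum.
by rewrite lasts_block mem_cat tF mem_head orbT.
Qed.

Lemma next_role_loop x y : last_role x -> first_role y -> next_role x y.
Proof. by case=> [[d dd ->]|[t tF ->]] y_first; [split=> //; right|right]. Qed.

Lemma follows_blocks_next x y : follows blocks x y -> next_role x y.
Proof.
rewrite /blocks follows_alts_map => /hasP [t _]; rewrite follows_block.
case/or4P.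
- rewrite /entries follows_chains => /hasP [d]; rewrite mem_filter => /andP [_ dd].
  by case/hasP=> k; rewrite mem_iota => /andP [_ kl] /andP [/eqP -> /eqP ->]; split=> //; left.
- case/andP; rewrite lasts_chains => /mapP [d].
  by rewrite mem_filter => /andP [/eqP <- dd] -> /eqP ->; split=> //; right.
- rewrite /exits follows_chains => /hasP [d]; rewrite mem_filter => /andP [_ dd].
  by case/hasP=> k; rewrite mem_iota => /andP [_ kl] /andP [/eqP -> /eqP ->]; split=> //; left.
- case/andP=> /eqP ->; rewrite firsts_chains => /mapP [d]; rewrite mem_filter.
  by case/andP=> /eqP dt dd ->; left; exists d.
Qed.

Lemma follows_code_loop x y : last_role x -> first_role y -> follows code x y.
Proof.
by move=> /lasts_blocksP x_last /firsts_codeP y_first; rewrite follows_code x_last y_first orbT.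
Qed.

Lemma follows_block_code t x y : follows (block t) x y -> follows code x y.
Proof.
move=> xy; rewrite follows_code /blocks follows_alts_map; apply/orP; left.
by apply/hasP; exists t; rewrite ?mem_enum.
Qed.

Lemma next_role_follows x y : next_role x y -> follows code x y.
Proof.
case: x => [s|d k|d k|//].
- case=> [[d dd [<- ->]]|[sF y_first]].
    apply: (follows_block_code (t := d.1.1)); rewrite follows_block /exits firsts_chains.
    by rewrite eqxx (map_f (fun d0 => Out d0 0)) ?orbT // mem_filter eqxx dd.
  by apply: follows_code_loop => //; right; exists s.
- case=> dd [[kl ->]|[-> y_first]].
    apply: (follows_block_code (t := d.1.1)); rewrite follows_block /exits follows_chains.
    apply/or4P; apply: Or43; apply/hasP; exists d; first by rewrite mem_filter eqxx dd.
    by apply/hasP; exists k; rewrite ?mem_iota ?eqxx.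
  by apply: follows_code_loop => //; left; exists d.
- case=> dd [[kl ->]|[-> ->]]; apply: (follows_block_code (t := d.2)); rewrite follows_block.
    rewrite /entries follows_chains; apply/or4P; apply: Or41.
    apply/hasP; exists d; first by rewrite mem_filter eqxx dd.
    by apply/hasP; exists k; rewrite ?mem_iota ?eqxx.
  rewrite /entries lasts_chains eqxx (map_f (fun d0 => In d0 (idx d0))) ?orbT //.
  by rewrite mem_filter eqxx dd.
Qed.

Lemma follows_codeP x y : follows code x y <-> next_role x y.
Proof.
split; last exact: next_role_follows.
rewrite follows_code => /orP [/follows_blocks_next //|/andP [/lasts_blocksP x_last]].
by move/firsts_codeP; apply: next_role_loop.
Qed.

Definition step_role (o : option role) y : Prop :=
  if o is Some x then next_role x y else first_role y.

Lemma stepP o y : step code o y <-> step_role o y.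
Proof. by case: o => [x|]; [apply: follows_codeP|apply: firsts_codeP]. Qed.

Definition lam a : seq (S + option bool) := inl a :: nseq m.+1 tick ++ [:: hash].
Definition out_atoms d : seq role := map (Out d) (iota 0 (m - idx d).+1).
Definition in_atoms d : seq role := map (In d) (iota 0 (idx d).+1).
Definition trans_walk d : seq role := out_atoms d ++ in_atoms d ++ [:: Hub d.2].

Lemma letter_In d a n : map letter (map (In d) (iota a n)) = nseq n tick.
Proof. by elim: n a => //= n IH a; rewrite IH. Qed.

Lemma letter_Out d a n : 0 < a -> map letter (map (Out d) (iota a n)) = nseq n tick.
Proof. by elim: n a => //= n IH [|a] // _; rewrite IH. Qed.

Lemma letter_trans_walk d : d \in ds -> map letter (trans_walk d) = lam d.1.2.
Proof.
move=> dd; rewrite /trans_walk /lam !map_cat /= letter_Out // letter_In /=.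
congr (_ :: _); rewrite -[RHS]/(nseq m.+1 tick ++ [:: hash]).
rewrite -[X in _ ++ X = _]/(nseq (idx d).+1 tick ++ [:: hash]) catA -nseqD.
by have := idx_lt dd => ?; congr (nseq _ _ ++ _); lia.
Qed.

Lemma in_walk n d k ys : walk code (Some (In d k)) ys ->
  map letter ys = nseq n tick ++ [:: hash] ->
  k + n = idx d /\ ys = map (In d) (iota k.+1 n) ++ [:: Hub d.2].
Proof.
elim: n k ys => [|n IH] k [|y ys] //; rewrite walk_cons => /andP [/stepP [dd y_next] ys_walk];
  case=> y_letter ys_letter.
- case: y_next => [[_ yE]|[-> yE]]; subst y => //.
  by case: ys ys_letter {ys_walk}; rewrite ?addn0.
- case: y_next => [[kl yE]|[_ yE]]; subst y => //.
  by have [<- ->] := IH _ _ ys_walk ys_letter; rewrite addSnnS.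
Qed.

Lemma out_walk d k ys : d \in ds -> k <= m - idx d -> walk code (Some (Out d k)) ys ->
  map letter ys = nseq (m.+1 - k) tick ++ [:: hash] ->
  ys = map (Out d) (iota k.+1 (m - idx d - k)) ++ in_atoms d ++ [:: Hub d.2].
Proof.
move=> dd; have := idx_lt dd; elim: ys k => [|y ys IH] k idx_m kl.
  by move=> _ /(congr1 size); rewrite size_cat addn1.
rewrite walk_cons => /andP [/stepP [_ [[kl' ->]|[kE y_first]]] ys_walk].
  rewrite (_ : m.+1 - k = (m.+1 - k.+1).+1); last lia.
  case=> /(IH _ idx_m kl' ys_walk) ->.
  by rewrite (_ : m - idx d - k = (m - idx d - k.+1).+1); last lia.
rewrite kE subnn (_ : m.+1 - (m - idx d) = (idx d).+1); last lia.
case: y_first ys_walk => [[d' dd' ->]|[t _ ->]|->] ys_walk //= [/(in_walk ys_walk) [d'd ->]].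
by rewrite add0n in d'd; rewrite (idx_inj dd' dd (esym d'd)).
Qed.

Lemma trans_walkP s a ys : walk code (Some (Hub s)) ys -> map letter ys = lam a ->
  exists2 d, d \in ds & [/\ d.1.1 = s, d.1.2 = a & ys = trans_walk d].
Proof.
case: ys => [|y ys] //; rewrite walk_cons => /andP [/stepP y_next].
case: y_next => [[d dd [<- ->]]|[_ [[d _ ->]|[t _ ->]|->]]] // ys_walk [<-].
move/(out_walk dd (leq0n _) ys_walk) ->.
by exists d => //; split; rewrite ?subn0.
Qed.

Lemma init_walkP ys : walk code None ys -> map letter ys = [:: hash] ->
  exists2 t, t \in init A & ys = [:: Hub t].
Proof.
case: ys => [|y [|z ys]] //; rewrite walk_cons => /andP [/stepP y_first _].
by case: y_first => [[d _ ->]|[t tI ->]|->] // _; exists t.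
Qed.

Lemma final_walkP s ys : walk code (Some (Hub s)) ys -> map letter ys = [:: dollar] ->
  s \in final A /\ ys = [:: Stop].
Proof.
case: ys => [|y [|z ys]] //; rewrite walk_cons => /andP [/stepP y_next _].
by case: y_next => [[d _ [_ ->]]|[sF [[d _ ->]|[t _ ->]|->]]].
Qed.

Lemma walk_chain (C : nat -> role) k n zs :
  (forall i, k <= i < k + n -> next_role (C i) (C i.+1)) ->
  walk code (Some (C (k + n))) zs -> walk code (Some (C k)) (map C (iota k.+1 n) ++ zs).
Proof.
elim: n k => [|n IH] k C_next; first by rewrite addn0.
move=> zs_walk; rewrite -[iota k.+1 n.+1]/(k.+1 :: iota k.+2 n) map_cons cat_cons walk_cons.
apply/andP; split.
  by apply/stepP; apply: C_next; lia.
by apply: IH => [i ki|]; [apply: C_next; lia|rewrite addSnnS].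
Qed.

Lemma walk_trans_walk d : d \in ds -> walk code (Some (Hub d.1.1)) (trans_walk d).
Proof.
move=> dd; have := idx_lt dd => idx_m.
rewrite /trans_walk /out_atoms /in_atoms -[iota 0 (m - idx d).+1]/(0 :: iota 1 (m - idx d)).
rewrite -[iota 0 (idx d).+1]/(0 :: iota 1 (idx d)) !map_cons !cat_cons walk_cons.
apply/andP; split.
  by apply/stepP; left; exists d.
apply: (walk_chain (C := Out d) (k := 0)) => [i ki|]; first by split=> //; left; split=> //; lia.
rewrite walk_cons; apply/andP; split.
  by apply/stepP; split=> //; right; split=> //; apply: Or31; exists d.
apply: (walk_chain (C := In d) (k := 0)) => [i ki|]; first by split=> //; left; split=> //; lia.
by rewrite walk_cons andbT; apply/stepP; split=> //; right.
Qed.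

Lemma walk_init t : t \in init A -> walk code None [:: Hub t].
Proof. by move=> tI; rewrite walk_cons andbT; apply/stepP; apply: Or32; exists t. Qed.

Lemma walk_final s : s \in final A -> walk code (Some (Hub s)) [:: Stop].
Proof. by move=> sF; rewrite walk_cons andbT; apply/stepP; right; split=> //; apply: Or33. Qed.

Definition role_state x : option Q :=
  match x with
  | Hub t => Some t
  | Out d _ => Some d.1.1
  | In d _ => Some d.2
  | Stop => None
  end.

Lemma mem_atoms_entries t x : x \in atoms (entries t) ->
  exists2 d, d \in ds & d.2 = t /\ x \in in_atoms d.
Proof.
rewrite atoms_chains => /allpairsPdep [d [k [+ kl ->]]].
by rewrite mem_filter => /andP [/eqP dt dd]; exists d; rewrite ?map_f.
Qed.

Lemma mem_atoms_exits t x : x \in atoms (exits t) ->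
  exists2 d, d \in ds & d.1.1 = t /\ x \in out_atoms d.
Proof.
rewrite atoms_chains => /allpairsPdep [d [k [+ kl ->]]].
by rewrite mem_filter => /andP [/eqP dt dd]; exists d; rewrite ?map_f.
Qed.

Lemma uniq_atoms_chains (C : D -> nat -> role) (L : D -> nat) (P : pred D) b :
  (forall d d' k k', C d k = C d' k' -> d = d' /\ k = k') ->
  uniq (atoms (chains C L [seq d <- ds | P d] b)).
Proof.
move=> C_inj; rewrite atoms_chains; apply: allpairs_uniq_dep.
- by rewrite filter_uniq ?enum_uniq.
- by move=> d _; apply: iota_uniq.
- by move=> [d k] [d' k'] _ _ /= /C_inj [-> ->].
Qed.

Lemma atoms_block t : atoms (block t) = atoms (entries t) ++ Hub t :: atoms (exits t).
Proof. by rewrite /block /= -catA. Qed.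

Lemma role_state_block t x : x \in atoms (block t) -> role_state x = Some t.
Proof.
rewrite atoms_block mem_cat inE => /or3P [/mem_atoms_entries|/eqP ->|/mem_atoms_exits] //.
- by case=> d _ [<- /mapP [k _ ->]].
- by case=> d _ [<- /mapP [k _ ->]].
Qed.

Lemma uniq_atoms_block t : uniq (atoms (block t)).
Proof.
rewrite atoms_block cat_uniq /= !uniq_atoms_chains ?andbT; try by move=> d d' k k' [-> ->].
rewrite negb_or; apply/and3P; split=> //; last first.
  by apply/negP => /mem_atoms_exits [d _ [_ /mapP [k _]]].
apply/andP; split; first by apply/negP => /mem_atoms_entries [d _ [_ /mapP [k _]]].
apply/hasPn => x /mem_atoms_exits [d _ [_ /mapP [k _ ->]]].
by apply/negP => /mem_atoms_entries [d' _ [_ /mapP [k' _]]].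
Qed.

Lemma atoms_code : atoms code = flatten [seq atoms (block t) | t <- enum Q] ++ [:: Stop].
Proof. by rewrite /code /= /blocks atoms_alts -map_comp. Qed.

Lemma uniq_atoms_code : uniq (atoms code).
Proof.
rewrite atoms_code cat_uniq /= orbF andbT; apply/andP; split.
  apply: (uniq_flatten_owned (owner := role_state)); first exact: enum_uniq.
    by move=> t _; apply: uniq_atoms_block.
  by move=> t _; apply: role_state_block.
by apply/flatten_mapP => -[t _ /role_state_block].
Qed.

Lemma Stop_code : Stop \in atoms code.
Proof. by rewrite atoms_code mem_cat mem_head orbT. Qed.

Lemma Hub_code t : Hub t \in atoms code.
Proof.
rewrite atoms_code mem_cat; apply/orP; left; apply/flatten_mapP.
by exists t; rewrite ?mem_enum // atoms_block mem_cat mem_head orbT.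
Qed.

Lemma mem_atoms_code x : x \in atoms code ->
  [\/ x = Stop, exists t, x = Hub t | exists2 d, d \in ds & x \in out_atoms d ++ in_atoms d].
Proof.
rewrite atoms_code mem_cat inE => /orP [/flatten_mapP [t _]|/eqP ->]; last exact: Or31.
rewrite atoms_block mem_cat inE => /or3P [/mem_atoms_entries|/eqP ->|/mem_atoms_exits].
- by case=> d dd [_ xd]; apply: Or33; exists d; rewrite // mem_cat xd orbT.
- by apply: Or32; exists t.
- by case=> d dd [_ xd]; apply: Or33; exists d; rewrite // mem_cat xd.
Qed.

Lemma size_atoms_code : size (atoms code) <= #|Q| + 2 * (m * m.+1) + 1.
Proof.
pose U := map Hub (enum Q) ++ [seq Out d k | d <- ds, k <- iota 0 m.+1] ++
          [seq In d k | d <- ds, k <- iota 0 m.+1] ++ [:: Stop].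
have -> : #|Q| + 2 * (m * m.+1) + 1 = size U.
  by rewrite /U !size_cat !size_allpairs size_map size_iota -cardE /= -/m; lia.
apply: uniq_leq_size; first exact: uniq_atoms_code.
move=> x /mem_atoms_code [->|[t ->]|[d dd]].
- by rewrite /U !mem_cat mem_head !orbT.
- by rewrite /U mem_cat map_f ?mem_enum.
have idx_m := idx_lt dd.
rewrite mem_cat /out_atoms /in_atoms /U !mem_cat.
case/orP => /mapP [k]; rewrite mem_iota => /andP [_ kl] ->.
  by rewrite (allpairs_f (@Out Q D)) ?orbT // mem_iota; lia.
by rewrite (allpairs_f (@In Q D)) ?orbT // mem_iota; lia.
Qed.

Lemma nstars_code : nstars code = 1.
Proof.
rewrite /code /= addn0 /blocks nstars_alts; congr _.+1.
by elim: (enum Q) => //= t l ->; rewrite !nstars_chains.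
Qed.

Lemma neps_code : neps code <= 2 * #|Q| + 1.
Proof.
rewrite /code /= addn0 /blocks neps_alts cardE; case: (nilp _); first lia.
elim: (enum Q) => //= t l IH.
have : neps (entries t) <= 1 by apply: neps_chains.
have : neps (exits t) <= 1 by apply: neps_chains.
lia.
Qed.

Lemma rsize_coding_regex : rsize coding_regex <= 10 * (m + #|Q|).+1 ^ 2.
Proof.
rewrite rsize_rmap; have := rsize_count code; rewrite nstars_code.
have := size_atoms_code; have := neps_code.
move: (rsize code) (size (atoms code)) (neps code) #|Q| => r a e n.
by rewrite expnS expn1; nia.
Qed.

(** * The topological coding *)

Local Notation G := (gl_full coding_regex).
Local Notation pos_of := (pos_of letter Stop_code).

Lemma last_trans_walk o d : last o (map Some (trans_walk d)) = Some (Hub d.2).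
Proof. by rewrite /trans_walk !map_cat !last_cat. Qed.

Lemma connect_hubs i p : path (aedge A) i p ->
  connect (aedge G) (Some (pos_of (Hub i))) (Some (pos_of (Hub (last i p)))).
Proof.
elim: p i => [|j p IH] i /=; first by rewrite connect0.
case/andP=> /existsP [a a_trans] /IH; apply: connect_trans.
have dd : (i, a, j) \in ds by rewrite mem_ds.
have := walk_connect letter uniq_atoms_code Stop_code (walk_trans_walk dd).
by rewrite last_trans_walk.
Qed.

Lemma connect_hub t : connect (aedge G) None (Some (pos_of (Hub t))) /\
                      connect (aedge G) (Some (pos_of (Hub t))) (Some (pos_of Stop)).
Proof.
have /andP [/existsP [i /andP [iI /connectP [p p_path ->]]]
            /existsP [f /andP [fF /connectP [p' p'_path fE]]]] := trimA t.
split.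
  apply: connect_trans (connect_hubs p_path).
  exact: (walk_connect letter uniq_atoms_code Stop_code (walk_init iI)).
apply: connect_trans (connect_hubs p'_path) _; rewrite -fE.
exact: (walk_connect letter uniq_atoms_code Stop_code (walk_final fF)).
Qed.

Lemma useful_coding q : useful G q.
Proof.
suff [iq qf] : connect (aedge G) None q /\ connect (aedge G) q (Some (pos_of Stop)).
  apply/andP; split; apply/existsP; [exists None|exists (Some (pos_of Stop))].
    by rewrite inE eqxx.
  by rewrite inE /= (gl_lastE Stop uniq_atoms_code) pos_ofK ?lasts_code ?mem_head ?Stop_code.
have None_Stop : connect (aedge G) None (Some (pos_of Stop)).
  by apply/connect1/(step_aedge letter uniq_atoms_code Stop_code (o := None))/stepP/Or33.
case: q => [al|]; last by split; [apply: connect0|].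
rewrite -(atom_atK uniq_atoms_code Stop_code al).
case/mem_atoms_code: (atom_at_mem Stop al) => [->|[t ->]|[d dd x_d]].
- by split; [|apply: connect0].
- exact: connect_hub.
have x_walk : atom_at Stop al \in trans_walk d by rewrite /trans_walk catA mem_cat x_d.
have [hub_x] := walk_connect_mem letter uniq_atoms_code Stop_code (walk_trans_walk dd) x_walk.
rewrite last_trans_walk => x_hub.
split; first exact: connect_trans (connect_hub _).1 hub_x.
exact: connect_trans x_hub (connect_hub _).2.
Qed.

Local Notation GlR := (Gl coding_regex).
Local Notation state := (trim_state G).
Local Notation state_of := (state_of Stop_code useful_coding).
Local Notation atom_of := (atom_of Stop).
Local Notation walk_comp := (walk_comp Stop_code useful_coding).

Definition nu s : state := state_of (Some (Hub s)).
Definition entry_comp s := walk_comp None [:: Hub s].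
Definition trans_comp d := walk_comp (Some (Hub d.1.1)) (trans_walk d).
Definition exit_comp s := walk_comp (Some (Hub s)) [:: Stop].

Lemma atom_of_state o : on_atoms code o -> atom_of (state_of o) = o.
Proof. exact: state_ofK. Qed.

Lemma atom_of_nu s : atom_of (nu s) = Some (Hub s).
Proof. exact/atom_of_state/Hub_code. Qed.

Lemma nuP q : (exists s, q = nu s) <-> exists s, atom_of q = Some (Hub s).
Proof.
split=> [[s ->]|[s qs]]; exists s; first exact: atom_of_nu.
by rewrite -(atom_ofK uniq_atoms_code Stop_code useful_coding q) qs.
Qed.

Lemma init_GlR q : (q \in init GlR) = (atom_of q == None).
Proof. exact: Gl_init. Qed.

Lemma final_GlR q : (q \in final GlR) = (atom_of q == Some Stop).
Proof.
rewrite (Gl_final Stop uniq_atoms_code) lasts_code nullable_code.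
by case: (atom_of q) => [y|] //; rewrite inE.
Qed.

Lemma is_comp_GlR c : is_comp GlR c ->
  exists2 ys, c = walk_comp (atom_of (csrc c)) ys & walk code (atom_of (csrc c)) ys.
Proof. exact: is_compP uniq_atoms_code Stop_code useful_coding c. Qed.

Lemma is_comp_walk_code o ys : walk code o ys -> on_atoms code o ->
  is_comp GlR (walk_comp o ys).
Proof. by move=> ys_walk o_code; apply: (is_comp_walk uniq_atoms_code). Qed.

Lemma entry_comp_bij : bij_on (init A)
  (fun c => [/\ is_comp GlR c, csrc c \in init GlR & clabel c = [:: hash]]) entry_comp.
Proof.
split.
- move=> s sI; split; first exact: is_comp_walk_code (walk_init sI) isT.
    by rewrite init_GlR csrc_walk atom_of_state.
  exact: clabel_walk.
- move=> s s' sI s'I /(walk_comp_inj (walk_atoms (walk_init sI)) (walk_atoms (walk_init s'I))).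
  by case.
move=> c [/is_comp_GlR [ys c_ys ys_walk]]; rewrite init_GlR => /eqP src.
rewrite src in c_ys ys_walk; rewrite {}c_ys clabel_walk => /(init_walkP ys_walk) [t tI ->].
by exists t.
Qed.

Lemma trans_comp_bij : bij_on (trans A)
  (fun c => [/\ is_comp GlR c, exists s, csrc c = nu s & exists a, clabel c = lam a])
  trans_comp.
Proof.
split.
- move=> d; rewrite -mem_ds => dd; split.
  + exact: is_comp_walk_code (walk_trans_walk dd) (Hub_code _).
  + by exists d.1.1.
  + by exists d.1.2; rewrite clabel_walk letter_trans_walk.
- move=> d d'; rewrite -!mem_ds => dd dd'.
  move/(walk_comp_inj (walk_atoms (walk_trans_walk dd)) (walk_atoms (walk_trans_walk dd'))).
  by rewrite /trans_walk => -[].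
move=> c [/is_comp_GlR [ys c_ys ys_walk] [s c_s] [a]].
rewrite c_s atom_of_nu in c_ys ys_walk; rewrite {}c_ys clabel_walk.
by case/(trans_walkP ys_walk) => d dd [<- _ ->]; exists d; rewrite -?mem_ds.
Qed.

Lemma exit_comp_bij : bij_on (final A)
  (fun c => [/\ is_comp GlR c, exists s, csrc c = nu s & clabel c = [:: dollar]]) exit_comp.
Proof.
split.
- move=> s sF; split; [exact: is_comp_walk_code (walk_final sF) (Hub_code _)|by exists s|].
  exact: clabel_walk.
- by move=> s s' _ _ /(congr1 (fun c => atom_of c.1)); rewrite /= !atom_of_nu => -[].
move=> c [/is_comp_GlR [ys c_ys ys_walk] [s c_s]].
rewrite c_s atom_of_nu in c_ys ys_walk; rewrite {}c_ys clabel_walk.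
by case/(final_walkP ys_walk) => sF ->; exists s.
Qed.

Lemma trans_walk_rcons d : trans_walk d = rcons (out_atoms d ++ in_atoms d) (Hub d.2).
Proof. by rewrite /trans_walk -cats1 catA. Qed.

Lemma last_in_atoms d x : last x (out_atoms d ++ in_atoms d) = In d (idx d).
Proof. by rewrite last_cat /in_atoms -addn1 iotaD map_cat last_cat. Qed.

Lemma entry_comp_spec s : ctgt (entry_comp s) = nu s /\
  (forall q, q \in cnonlast (entry_comp s) -> ~ exists s', q = nu s').
Proof.
split=> // q; rewrite /cnonlast /= inE => /eqP -> /nuP [s'].
by rewrite atom_of_state.
Qed.

Lemma trans_comp_spec s a t : (s, a, t) \in trans A ->
  [/\ csrc (trans_comp (s, a, t)) = nu s, clabel (trans_comp (s, a, t)) = lam a,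
      ctgt (trans_comp (s, a, t)) = nu t &
      forall q, q \in cinternal (trans_comp (s, a, t)) -> ~ exists s', q = nu s'].
Proof.
rewrite -mem_ds => dd; split=> //.
- by rewrite clabel_walk letter_trans_walk.
- by rewrite ctgt_walk /trans_walk !last_cat.
move=> q; rewrite /trans_comp trans_walk_rcons cinternal_walk => /mapP [x x_walk ->] /nuP [s'].
have x_code : x \in atoms code.
  apply: (allP (walk_atoms (walk_trans_walk dd))).
  by rewrite trans_walk_rcons mem_rcons inE x_walk orbT.
rewrite atom_of_state // => -[x_hub]; move: x_walk.
by rewrite x_hub mem_cat => /orP [] /mapP [].
Qed.

Lemma exit_comp_spec s : s \in final A -> ctgt (exit_comp s) \in final GlR /\
  (forall q, q \in cnonfirst (exit_comp s) -> ~ exists s', q = nu s').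
Proof.
move=> sF; split; first by rewrite final_GlR ctgt_walk atom_of_state /= ?Stop_code.
by move=> q; rewrite /cnonfirst /= inE => /eqP -> /nuP [s']; rewrite atom_of_state /= ?Stop_code.
Qed.

Inductive piece := Entry of Q | Edge of D | Exit of Q.

Definition step_piece (o : option role) y : option piece :=
  match y, o with
  | Out d _, _ | In d _, _ => Some (Edge d)
  | Hub s, None => Some (Entry s)
  | Hub _, Some (In d _) => Some (Edge d)
  | Stop, Some (Hub s) => Some (Exit s)
  | _, _ => None
  end.

Definition trans_piece (t : state * (S + option bool) * state) : option piece :=
  if atom_of t.2 is Some y then step_piece (atom_of t.1.1) y else None.

Definition state_piece (q : state) : option piece :=
  match atom_of q with
  | Some (Out d _) | Some (In d _) => Some (Edge d)
  | _ => None
  end.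

Definition piece_comp (k : piece) :=
  match k with Entry s => entry_comp s | Edge d => trans_comp d | Exit s => exit_comp s end.

Lemma trans_piece_walk o ys k : walk code o ys -> on_atoms code o ->
  {in steps o ys, forall p, step_piece p.1 p.2 = Some k} ->
  {in ctrans (walk_comp o ys), forall e, trans_piece e = Some k}.
Proof.
move=> /walk_atoms/allP ys_code o_code steps_k e; rewrite ctrans_walk => /mapP [p p_steps ->].
have [p1_code p2_code] : on_atoms code p.1 /\ on_atoms code (Some p.2).
  by have [[->|[y y_ys ->]] p2] := mem_steps p_steps; split=> //; apply: ys_code.
by rewrite /trans_piece /= (pos_ofK letter Stop_code p2_code) atom_of_state //; apply: steps_k.
Qed.

Definition coded_comp c :=
  (exists2 s, s \in init A & c = entry_comp s) \/
  (exists2 d, d \in trans A & c = trans_comp d) \/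
  (exists2 s, s \in final A & c = exit_comp s).

Lemma chain_atoms_piece d o x : x \in out_atoms d ++ in_atoms d -> step_piece o x = Some (Edge d).
Proof. by rewrite mem_cat => /orP [] /mapP [k _ ->]. Qed.

Lemma trans_comp_pieces d : d \in ds ->
  {in ctrans (trans_comp d), forall e, trans_piece e = Some (Edge d)} /\
  {in cinternal (trans_comp d), forall q, state_piece q = Some (Edge d)}.
Proof.
move=> dd; have d_code := allP (walk_atoms (walk_trans_walk dd)).
split.
  apply: trans_piece_walk (walk_trans_walk dd) (Hub_code _) _ => p.
  rewrite trans_walk_rcons steps_rcons mem_rcons inE => /predU1P [->|/mem_steps [_]].
    by rewrite (last_map Some) last_in_atoms.
  exact: chain_atoms_piece.
move=> q; rewrite /trans_comp trans_walk_rcons cinternal_walk => /mapP [x x_walk ->].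
have x_code : x \in atoms code.
  by apply: d_code; rewrite trans_walk_rcons mem_rcons inE x_walk orbT.
rewrite /state_piece atom_of_state //.
by move: x_walk; rewrite mem_cat => /orP [] /mapP [k _ ->].
Qed.

Lemma coded_comp_piece c : coded_comp c -> exists k, [/\ c = piece_comp k,
  {in ctrans c, forall e, trans_piece e = Some k} &
  {in cinternal c, forall q, state_piece q = Some k}].
Proof.
case=> [[s sI ->]|[[d dT ->]|[s sF ->]]].
- exists (Entry s); split=> //.
  by apply: trans_piece_walk (walk_init sI) isT _ => p; rewrite inE => /eqP ->.
- by move: dT; rewrite -mem_ds => /trans_comp_pieces [e_d q_d]; exists (Edge d).
- exists (Exit s); split=> //.
  by apply: trans_piece_walk (walk_final sF) (Hub_code _) _ => p; rewrite inE => /eqP ->.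
Qed.

Lemma coded_comp_disjoint c1 c2 : coded_comp c1 -> coded_comp c2 ->
  (exists e, e \in ctrans c1 /\ e \in ctrans c2) \/
  (exists q, q \in cinternal c1 /\ q \in cinternal c2) -> c1 = c2.
Proof.
move=> /coded_comp_piece [k1 [-> e1 q1]] /coded_comp_piece [k2 [-> e2 q2]].
by case=> [[e [/e1 k1e /e2]]|[q [/q1 k1q /q2]]]; [rewrite k1e|rewrite k1q] => -[->].
Qed.

Lemma coding : topological_coding A GlR.
Proof.
exists [:: hash], [:: dollar], lam, nu; split.
  split=> [a a' [] //|a //|s s' ss'].
  by have := atom_of_nu s; rewrite ss' atom_of_nu => -[].
exists entry_comp, trans_comp, exit_comp; split.
  by split; [exact: entry_comp_bij|exact: trans_comp_bij|exact: exit_comp_bij].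
split.
- by move=> s _; apply: entry_comp_spec.
- exact: trans_comp_spec.
- exact: exit_comp_spec.
- exact: coded_comp_disjoint.
Qed.

Definition first_roles : seq role := [seq In d 0 | d <- ds] ++ map Hub (enum Q) ++ [:: Stop].
Definition last_roles : seq role := [seq Out d (m - idx d) | d <- ds] ++ map Hub (enum Q).

Definition step_list : seq (option role * role) :=
  [seq (None, y) | y <- first_roles] ++ [seq (Some x, y) | x <- last_roles, y <- first_roles] ++
  [seq (Some (In d k), In d k.+1) | d <- ds, k <- iota 0 m] ++
  [seq (Some (In d (idx d)), Hub d.2) | d <- ds] ++
  [seq (Some (Hub d.1.1), Out d 0) | d <- ds] ++
  [seq (Some (Out d k), Out d k.+1) | d <- ds, k <- iota 0 m].

Lemma first_roles_mem y : first_role y -> y \in first_roles.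
Proof.
case=> [[d dd ->]|[t _ ->]|->]; rewrite !mem_cat ?mem_head ?orbT //.
- by rewrite (map_f (fun d => In d 0)).
- by rewrite map_f ?mem_enum ?orbT.
Qed.

Lemma last_roles_mem x : last_role x -> x \in last_roles.
Proof.
case=> [[d dd ->]|[t _ ->]]; rewrite mem_cat.
- by rewrite (map_f (fun d => Out d (m - idx d))).
- by rewrite map_f ?mem_enum ?orbT.
Qed.

Lemma step_list_mem o y : step_role o y -> (o, y) \in step_list.
Proof.
rewrite /step_list !mem_cat; case: o => [x|] /=; last first.
  by move/first_roles_mem => y_first; rewrite (map_f (fun y => (None, y))).
have loop x' : last_role x' -> first_role y -> (Some x', y) \in
    [seq (Some x, y) | x <- last_roles, y <- first_roles].
  by move=> /last_roles_mem ? /first_roles_mem ?; apply: (allpairs_f (fun x y => (Some x, y))).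
case: x => [s|d k|d k|//].
- case=> [[d dd [<- ->]]|[sF y_first]].
    by rewrite (map_f (fun d => (Some (Hub d.1.1), Out d 0))) ?orbT.
  by rewrite loop ?orbT //; right; exists s.
- case=> dd [[kl ->]|[-> y_first]]; last by rewrite loop ?orbT //; left; exists d.
  have km : k \in iota 0 m by rewrite mem_iota; lia.
  by rewrite (allpairs_f (fun d k => (Some (Out d k), Out d k.+1))) ?orbT.
- case=> dd [[kl ->]|[-> ->]].
    have km : k \in iota 0 m by rewrite mem_iota; have := idx_lt dd; lia.
    by rewrite (allpairs_f (fun d k => (Some (In d k), In d k.+1))) ?orbT.
  by rewrite (map_f (fun d => (Some (In d (idx d)), Hub d.2))) ?orbT.
Qed.

Lemma size_step_list : size step_list <= 3 * (m + #|Q| + 1) ^ 2.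
Proof.
rewrite /step_list /first_roles /last_roles !size_cat !size_allpairs !size_map !size_cat.
rewrite !size_map size_iota -/m cardT enumT /=; move: (size (Finite.enum Q)) => n.
by rewrite expnS expn1; nia.
Qed.

Lemma card_trans_GlR : #|trans GlR| <= 3 * (m + #|Q| + 1) ^ 2.
Proof.
have atom_of_inj : injective atom_of := can_inj (atom_ofK uniq_atoms_code Stop_code useful_coding).
pose f (e : state * (S + option bool) * state) := (atom_of e.1.1, odflt Stop (atom_of e.2)).
rewrite cardE -(size_map f); apply: leq_trans size_step_list; apply: uniq_leq_size.
  rewrite map_inj_in_uniq ?enum_uniq // => [[[p a] q]] [[p' a'] q'].
  rewrite !mem_enum !(Gl_trans Stop uniq_atoms_code) /f /=.
  case q_y: (atom_of q) => [y|] // /andP [/eqP -> _].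
  case q'_y: (atom_of q') => [y'|] // /andP [/eqP a'_y _] [/atom_of_inj <- y_y'].
  by rewrite a'_y -y_y' (@atom_of_inj q q'); rewrite ?q_y ?q'_y ?y_y'.
move=> e /mapP [[[p a] q] + ->]; rewrite mem_enum (Gl_trans Stop uniq_atoms_code) /f /=.
by case: (atom_of q) => [y|] // /andP [_ /stepP /step_list_mem].
Qed.

End Construction.

Theorem theoremC44 :
  exists C : nat,
    forall (S Q : finType) (A : automaton S Q), trim A ->
      exists (SB : finType) (R : regex SB),
        [/\ topological_coding A (Gl R),
            rsize R <= C * (#|trans A| + #|Q|).+1 ^ 2,
            nstars R = 1 &
            #|trans (Gl R)| <= C * (#|trans A| + #|Q|).+1 ^ 2].
Proof.
exists 10 => S Q A trimA; exists (S + option bool)%type, (coding_regex A).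
rewrite [#|trans A|]card_trans; split.
- exact: coding.
- exact: rsize_coding_regex.
- by rewrite nstars_rmap nstars_code.
- apply: leq_trans (card_trans_GlR trimA) _.
  by rewrite addn1 leq_mul2r orbT.
Qed.
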